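(* Let $G$ be a finite connected graph that is either non-bipartite or contains a node of degree larger than two. Then for every $k$ with $2\le k<|V|$, the $k$-node CIS relationship graph $G^{(k)}$ is non-bipartite.
   Context: Let $G=(V,E,L)$ be a finite undirected graph with node set $V$, edge set $E$ (unordered pairs of distinct nodes) and a set $L$ of edge labels (labels play no role here). For $V'\subseteq V$, the induced subgraph on $V'$ has node set $V'$ and edge set $\{(i,j)\in E: i,j\in V'\}$. A $k$-node CIS (connected induced subgraph) is an induced subgraph on a $k$-element set $V'\subseteq V$ that is connected; $C^{(k)}$ denotes the set of all $k$-node CISes of $G$. The $k$-node CIS relationship graph $G^{(k)}=(C^{(k)},R^{(k)})$ is the simple undirected graph whose nodes are the elements of $C^{(k)}$, where two distinct CISes $s_1,s_2\in C^{(k)}$ are adjacent iff their node sets share exactly $k-1$ nodes. *)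

From mathcomp Require Import all_boot.
Set Implicit Arguments. Unset Strict Implicit. Unset Printing Implicit Defensive.

(* A finite simple undirected graph: node set T (a finType), edge relation e
   that is symmetric and irreflexive. Edge labels play no role and are omitted. *)
Definition simple_graph (T : finType) (e : rel T) : Prop :=
  symmetric e /\ irreflexive e.

Definition connected_graph (T : finType) (e : rel T) : Prop :=
  forall x y : T, connect e x y.

Definition degree (T : finType) (e : rel T) (x : T) : nat := #|[set y | e x y]|.

Definition bipartite_on (T : finType) (V : pred T) (r : rel T) : Prop :=
  exists f : T -> bool,
    forall x y, x \in V -> y \in V -> r x y -> f x != f y.

Definition bipartite (T : finType) (e : rel T) : Prop := bipartite_on predT e.

Definition induced_rel (T : finType) (e : rel T) (S : {set T}) : rel T :=
  fun x y => [&& x \in S, y \in S & e x y].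

Definition induced_connected (T : finType) (e : rel T) (S : {set T}) : bool :=
  [forall x in S, forall y in S, connect (induced_rel e S) x y].

Definition is_CIS (T : finType) (e : rel T) (k : nat) (S : {set T}) : bool :=
  (#|S| == k) && induced_connected e S.

Definition CIS_adj (T : finType) (e : rel T) (k : nat) : rel {set T} :=
  fun S1 S2 => [&& is_CIS e k S1, is_CIS e k S2, S1 != S2 & #|S1 :&: S2| == k.-1].

Definition CIS_graph_bipartite (T : finType) (e : rel T) (k : nat) : Prop :=
  bipartite_on (fun S : {set T} => is_CIS e k S) (CIS_adj e k).

From mathcomp Require Import all_boot zify.
Set Implicit Arguments. Unset Strict Implicit. Unset Printing Implicit Defensive.

(* Every node of G^(k) is a k-node CIS, and a closed walk of odd length in
   G^(k) rules out a 2-colouring.  We exhibit such a walk in two cases.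

   - Some node v has three neighbours a, b, c.  For k = 2 the edges va, vb, vc
     form a triangle.  For k >= 3 we grow the star {v, a, b, c} one boundary
     node at a time into a connected (k+1)-set U that keeps three distinct
     "removable" nodes (nodes whose deletion leaves U connected); deleting
     each of them gives three k-node CISes that pairwise share k-1 nodes.

   - All degrees are at most two.  A connected graph of maximum degree two
     has a spanning path; colouring by the parity of positions is proper
     unless the ends are joined and close an odd cycle through all n nodes.
     The n windows of k consecutive nodes of that cycle then form a closed
     walk of odd length n in G^(k). *)

Section InducedConnectivity.
Variables (T : finType) (e : rel T).
Hypothesis e_sym : symmetric e.

Lemma induced_rel_sym (S : {set T}) : symmetric (induced_rel e S).
Proof. by move=> x y; rewrite /induced_rel e_sym andbCA. Qed.

Lemma induced_connected_from (S : {set T}) (v : T) :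
  v \in S -> (forall x, x \in S -> connect (induced_rel e S) v x) ->
  induced_connected e S.
Proof.
move=> vS reach; apply/forall_inP => x xS; apply/forall_inP => y yS.
apply: connect_trans (reach y yS).
by rewrite (sym_connect_sym (induced_rel_sym S)) reach.
Qed.

Lemma induced_connected_star (S : {set T}) (v : T) :
  v \in S -> {in S :\ v, forall x, e v x} -> induced_connected e S.
Proof.
move=> vS nbr; apply: (induced_connected_from vS) => x xS.
have [->|xv] := eqVneq x v; first exact: connect0.
by apply: connect1; rewrite /induced_rel vS xS nbr // !inE xv.
Qed.

Lemma induced_connected_setU1 (S : {set T}) (x y : T) :
  induced_connected e S -> x \in S -> e x y -> induced_connected e (y |: S).
Proof.
move=> cS xS exy; apply: (induced_connected_from (v := x)).
  by rewrite !inE xS orbT.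
move=> z; rewrite in_setU1 => /predU1P [->|zS].
  by apply: connect1; rewrite /induced_rel !inE eqxx xS exy orbT.
have /forall_inP/(_ x xS)/forall_inP/(_ z zS) := cS.
apply: connect_sub => a b /and3P [aS bS eab].
by apply: connect1; rewrite /induced_rel !inE aS bS eab !orbT.
Qed.

End InducedConnectivity.

Lemma boundary_edge (T : finType) (e : rel T) (S : {set T}) (x y : T) :
  connect e x y -> x \in S -> y \notin S ->
  exists u w, [/\ u \in S, w \notin S & e u w].
Proof.
move/connectP => [p + ->]; elim: p x => [|z p IH] x /=; first by move=> _ ->.
move=> /andP [exz pz] xS yS.
have [zS|zS] := boolP (z \in S); first exact: IH pz zS yS.
by exists x, z.
Qed.

Lemma degree_gt2 (T : finType) (e : rel T) (x a b c : T) :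
  e x a -> e x b -> e x c -> uniq [:: a; b; c] -> 2 < degree e x.
Proof.
move=> ea eb ec uabc; rewrite /degree.
have <- : #|[:: a; b; c]| = 3 by apply/card_uniqP.
by apply: subset_leq_card; apply/subsetP => z; rewrite !inE => /or3P [] /eqP ->.
Qed.

Lemma degree_gt2_neighbours (T : finType) (e : rel T) (x : T) :
  2 < degree e x ->
  exists a b c, [/\ e x a, e x b, e x c & uniq [:: a; b; c]].
Proof.
rewrite /degree => dx.
have /card_gt0P [a aN] : 0 < #|[set y | e x y]| by lia.
have /card_gt0P [b bN] : 0 < #|[set y | e x y] :\ a|.
  by rewrite (cardsD1 a) aN in dx; lia.
have /card_gt0P [c cN] : 0 < #|[set y | e x y] :\ a :\ b|.
  by rewrite (cardsD1 a) aN (cardsD1 b) bN in dx; lia.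
move: aN bN cN; rewrite !inE => eA /andP [ba eB] /and3P [cb ca eC].
by exists a, b, c; split; rewrite //= !inE negb_or eq_sym ba eq_sym ca eq_sym cb.
Qed.

Lemma odd_closed_walk_not_bipartite (X : finType) (V : pred X) (r : rel X)
    (w : nat -> X) (n : nat) :
  (forall i, i <= n -> w i \in V) -> (forall i, i < n -> r (w i) (w i.+1)) ->
  w n = w 0 -> odd n -> ~ bipartite_on V r.
Proof.
move=> wV wr closed odd_n [f proper].
have parity i : i <= n -> f (w i) = f (w 0) (+) odd i.
  elim: i => [|i IH] le_in; first by rewrite addbF.
  have := proper _ _ (wV i (ltnW le_in)) (wV i.+1 le_in) (wr i le_in).
  by rewrite IH ?(ltnW le_in) //= addbN; case: (f (w i.+1)); case: (_ (+) _).
by have := parity n (leqnn n); rewrite closed odd_n addbT; case: (f (w 0)).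
Qed.

Lemma CIS_triangle (T : finType) (e : rel T) (k : nat) (A B C : {set T}) :
  is_CIS e k A -> is_CIS e k B -> is_CIS e k C -> uniq [:: A; B; C] ->
  #|A :&: B| = k.-1 -> #|B :&: C| = k.-1 -> #|C :&: A| = k.-1 ->
  ~ CIS_graph_bipartite e k.
Proof.
move=> cA cB cC; rewrite /= !inE andbT => /andP [/norP [nAB nAC] nBC] iAB iBC iCA.
pose w i := nth A [:: A; B; C] i.
apply: (@odd_closed_walk_not_bipartite _ _ _ w 3) => // i.
  by case: i => [|[|[|[|]]]] //= _; rewrite unfold_in /w.
by case: i => [|[|[|]]] //= _; rewrite /w /CIS_adj /= ?cA ?cB ?cC ?iAB ?iBC ?iCA
  eqxx ?nAB ?nBC // eq_sym nAC.
Qed.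

Lemma card_setD1I (T : finType) (U : {set T}) (x1 x2 : T) :
  x1 \in U -> x2 \in U -> x1 != x2 -> #|(U :\ x1) :&: (U :\ x2)| = #|U|.-2.
Proof.
move=> x1U x2U x12; rewrite setIDA setIDAC setIid.
have x2U1 : x2 \in U :\ x1 by rewrite !inE eq_sym x12.
by rewrite [in RHS](cardsD1 x1) x1U [in RHS](cardsD1 x2 (U :\ x1)) x2U1.
Qed.

Section RemovableTriples.
Variables (T : finType) (e : rel T).
Hypothesis e_sym : symmetric e.

Definition removable (U : {set T}) (x : T) : bool :=
  (x \in U) && induced_connected e (U :\ x).

Definition has_removable_triple (U : {set T}) : Prop :=
  induced_connected e U /\
  exists2 s : seq T, size s = 3 & uniq s && all (removable U) s.

Lemma removable_triple_triangle (k : nat) (U : {set T}) :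
  #|U| = k.+1 -> has_removable_triple U -> ~ CIS_graph_bipartite e k.
Proof.
move=> cardU [_ [[|x1 [|x2 [|x3 [|]]]] //= _]].
rewrite !inE => /and5P [/and3P [/norP [x12 x13] x23 _] r1 r2 r3 _].
have CIS x : removable U x -> is_CIS e k (U :\ x).
  case/andP=> xU cx; rewrite /is_CIS cx andbT.
  by have := cardsD1 x U; rewrite xU cardU => /eqP; rewrite eqSS => /eqP <-.
have mem x : removable U x -> x \in U by case/andP.
have neq x y : removable U x -> x != y -> U :\ x != U :\ y.
  move=> rx xy; apply/eqP => Exy.
  have : x \in U :\ x by rewrite Exy !inE xy mem.
  by rewrite !inE eqxx.
apply: (CIS_triangle (CIS _ r1) (CIS _ r2) (CIS _ r3)).
- by rewrite /= !inE negb_or !neq.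
- by rewrite (card_setD1I (U:=U)) ?cardU ?mem.
- by rewrite (card_setD1I (U:=U)) ?cardU ?mem.
- by rewrite (card_setD1I (U:=U)) ?cardU ?mem // eq_sym.
Qed.

(* When U grows by a node y attached at x, a removable node z of U stays
   removable, except that the role of x is taken over by y. *)
Definition trade (x y z : T) : T := if z == x then y else z.

Lemma removable_setU1 (U : {set T}) (x y z : T) :
  induced_connected e U -> x \in U -> y \notin U -> e x y ->
  removable U z -> removable (y |: U) (trade x y z).
Proof.
move=> cU xU yU exy /andP [zU cz]; rewrite /trade /removable.
have [_ | zx] := eqVneq z x; first by rewrite setU1K // !inE eqxx.
have -> : (y |: U) :\ z = y |: (U :\ z).
  have yz : y != z by apply: contraNneq yU => ->.
  by apply/setP => w; rewrite !inE; have [->|//] := eqVneq w y; rewrite yz.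
rewrite !inE zU orbT /=.
by apply: (induced_connected_setU1 e_sym cz _ exy); rewrite !inE eq_sym zx.
Qed.

Lemma trade_inj (U : {set T}) (x y : T) :
  y \notin U -> {in U &, injective (trade x y)}.
Proof.
move=> yU z1 z2 z1U z2U; rewrite /trade.
have [->|_] := eqVneq z1 x; have [->|_] := eqVneq z2 x => // E.
- by rewrite E z2U in yU.
- by rewrite -E z1U in yU.
Qed.

Lemma has_removable_triple_setU1 (U : {set T}) (x y : T) :
  has_removable_triple U -> x \in U -> y \notin U -> e x y ->
  has_removable_triple (y |: U).
Proof.
move=> [cU [s size_s /andP [us rs]]] xU yU exy.
split; first exact: (induced_connected_setU1 e_sym cU xU exy).
exists (map (trade x y) s); first by rewrite size_map.
have sU : {subset s <= U} by move=> z /(allP rs) /andP [].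
rewrite map_inj_in_uniq ?us; last first.
  by move=> z1 z2 /sU z1U /sU z2U; apply: (trade_inj (x := x) yU).
by apply/allP => _ /mapP [z /(allP rs) rz ->]; apply: removable_setU1.
Qed.

Lemma star_removable_triple (v a b c : T) :
  irreflexive e -> e v a -> e v b -> e v c -> uniq [:: a; b; c] ->
  #|[set v; a; b; c]| = 4 /\ has_removable_triple [set v; a; b; c].
Proof.
move=> e_irr eva evb evc uabc.
have nv w : e v w -> v != w by apply: contraTneq => <-; rewrite e_irr.
set U := [set v; a; b; c].
have vU : v \in U by rewrite !inE eqxx.
have hub : {in U :\ v, forall w, e v w}.
  move=> w; rewrite !inE -!orbA => /andP [wv].
  by rewrite (negbTE wv) /= => /or3P [] /eqP ->.
have rem w : w \in U :\ v -> removable U w.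
  move=> wUv; have [_ wU] := setD1P wUv; rewrite /removable wU /=.
  have vw : v != w by apply: nv; apply: hub.
  apply: (induced_connected_star e_sym (v := v)); first by rewrite !inE vw eqxx.
  by move=> u; rewrite !inE => /and3P [uv _ uU]; apply: hub; rewrite !inE uv.
have inUv w : e v w -> w \in [:: a; b; c] -> w \in U :\ v.
  move=> /nv vw wabc; rewrite in_setD1 eq_sym vw; move: wabc.
  by rewrite !inE => /or3P [] ->; rewrite !(orbT, orTb).
split.
  have <- : #|[:: v; a; b; c]| = #|U| by apply: eq_card => z; rewrite !inE !orbA.
  by apply/card_uniqP; rewrite cons_uniq uabc !inE !negb_or !nv.
split; first exact: (induced_connected_star e_sym vU hub).
by exists [:: a; b; c] => //; rewrite uabc /= !rem ?inUv // !inE eqxx ?orbT.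
Qed.
End RemovableTriples.

Lemma has_removable_triple_card (T : finType) (e : rel T) (U : {set T}) :
  has_removable_triple e U -> 3 <= #|U|.
Proof.
move=> [_ [s size_s /andP [us /allP rs]]]; rewrite -size_s -(card_uniqP us).
by apply/subset_leq_card/subsetP => x /rs /andP [].
Qed.

Lemma removable_triple_of_size (T : finType) (e : rel T) (U0 : {set T}) :
  symmetric e -> connected_graph e -> has_removable_triple e U0 ->
  forall m, #|U0| <= m <= #|T| ->
  exists U : {set T}, #|U| = m /\ has_removable_triple e U.
Proof.
move=> e_sym conn hU0; elim=> [|m IH] /andP [U0m mT].
  by exists U0; split => //; apply/eqP; rewrite -leqn0.
have [<- | U0m'] := eqVneq #|U0| m.+1; first by exists U0.
have [U [cardU hU]] : exists U : {set T}, #|U| = m /\ has_removable_triple e U.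
  by apply: IH; apply/andP; split; lia.
have /card_gt0P [y yU] : 0 < #|~: U| by have := cardsC U; lia.
have /card_gt0P [x xU] : 0 < #|U| by have := has_removable_triple_card hU; lia.
rewrite inE in yU.
have [u [w [uU wU euw]]] := boundary_edge (conn x y) xU yU.
exists (w |: U); split; first by rewrite cardsU1 wU cardU.
exact: (has_removable_triple_setU1 e_sym hU uU wU euw).
Qed.

Lemma star_edges_triangle (T : finType) (e : rel T) (v a b c : T) :
  symmetric e -> irreflexive e -> e v a -> e v b -> e v c ->
  uniq [:: a; b; c] -> ~ CIS_graph_bipartite e 2.
Proof.
move=> e_sym e_irr eva evb evc.
rewrite /= !inE andbT => /andP [/norP [ab ac] bc].
have nv w : e v w -> v != w by apply: contraTneq => <-; rewrite e_irr.
have edge w : e v w -> is_CIS e 2 [set v; w].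
  move=> evw; rewrite /is_CIS cards2 nv //=.
  apply: (induced_connected_star e_sym (v := v)); first by rewrite !inE eqxx.
  by move=> u; rewrite !inE => /andP [/negbTE -> /= /eqP ->].
have meet w w' : e v w -> w != w' -> #|[set v; w] :&: [set v; w']| = 2.-1.
  move=> evw ww'.
  suff -> : [set v; w] :&: [set v; w'] = [set v] by rewrite cards1.
  apply/setP => z; rewrite !inE.
  by case: (z =P v) => //= _; case: (z =P w) => // ->; rewrite (negbTE ww').
have neq w w' : e v w -> w != w' -> [set v; w] != [set v; w'].
  move=> evw ww'; apply/negP => /eqP E.
  have : w \in [set v; w'] by rewrite -E !inE eqxx orbT.
  by rewrite !inE (negbTE ww') orbF eq_sym (negbTE (nv w evw)).
apply: (CIS_triangle (edge a eva) (edge b evb) (edge c evc)).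
- by rewrite /= !inE negb_or !neq.
- exact: meet.
- exact: meet.
- by apply: meet; rewrite // eq_sym.
Qed.

Lemma high_degree_not_bipartite (T : finType) (e : rel T) (k : nat) (v : T) :
  simple_graph e -> connected_graph e -> 2 < degree e v ->
  2 <= k -> k < #|T| -> ~ CIS_graph_bipartite e k.
Proof.
move=> [e_sym e_irr] conn dv k2 kT.
have [a [b [c [eva evb evc uabc]]]] := degree_gt2_neighbours dv.
have [-> | k3] := eqVneq k 2; first exact: star_edges_triangle eva evb evc uabc.
have [card4 star] := star_removable_triple e_sym e_irr eva evb evc uabc.
have range : #|[set v; a; b; c]| <= k.+1 <= #|T|.
  by rewrite card4; apply/andP; split; lia.
have [U [cardU hU]] := removable_triple_of_size e_sym conn star range.
exact: removable_triple_triangle cardU hU.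
Qed.

Section CycleWindows.
Variables (T : finType) (e : rel T) (n k : nat) (c : nat -> T).
Hypothesis e_sym : symmetric e.
Hypothesis c_period : forall i, c (i + n) = c i.
Hypothesis c_inj : forall i j, c i = c j -> i = j %[mod n].
Hypothesis c_edge : forall i, e (c i) (c i.+1).
Hypothesis k_gt0 : 0 < k.
Hypothesis k_lt_n : k < n.

Definition window (i : nat) : {set T} := [set c (i + t) | t : 'I_k].

Lemma mem_window (i t : nat) : t < k -> c (i + t) \in window i.
Proof. by move=> tk; apply/imsetP; exists (Ordinal tk). Qed.

Lemma walk_offset_inj (i t1 t2 : nat) :
  t1 < n -> t2 < n -> c (i + t1) = c (i + t2) -> t1 = t2.
Proof.
move=> t1n t2n /c_inj /eqP; rewrite eqn_modDl !modn_small //; exact/eqP.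
Qed.

Lemma card_window (i : nat) : #|window i| = k.
Proof.
rewrite card_imset ?card_ord // => t1 t2 /walk_offset_inj E; apply: val_inj.
by apply: E; apply: ltn_trans k_lt_n.
Qed.

Lemma window_CIS (i : nat) : is_CIS e k (window i).
Proof.
rewrite /is_CIS card_window eqxx /=.
apply: (induced_connected_from e_sym (v := c i)).
  by have := mem_window i k_gt0; rewrite addn0.
move=> _ /imsetP [[t tk] _ ->] /=.
elim: t tk => [|t IH] tk; first by rewrite addn0.
apply: connect_trans (IH (ltnW tk)) (connect1 _).
by rewrite /induced_rel !mem_window ?addnS ?c_edge // ltnW.
Qed.

Lemma window_start_notin_next (i : nat) : c i \notin window i.+1.
Proof.
apply/imsetP => [[[t tk] _ /= E]].
have tn : t.+1 < n by apply: leq_ltn_trans k_lt_n.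
have := @walk_offset_inj i 0 t.+1 (ltn_trans (ltn0Sn t) tn) tn.
by rewrite addn0 addnS -addSn => /(_ E).
Qed.

Lemma window_meet (i : nat) : window i :&: window i.+1 = window i :\ c i.
Proof.
apply/setP => x; rewrite !inE andbC.
case xW: (x \in window i); rewrite ?andbF ?andbT //.
move: xW => /imsetP [[[|t] tk] _ ->] /=.
  by rewrite addn0 eqxx (negbTE (window_start_notin_next i)).
have tn : t.+1 < n by apply: ltn_trans k_lt_n.
have ne : c (i + t.+1) != c i.
  apply/eqP => E; have := @walk_offset_inj i t.+1 0 tn (ltn_trans (ltn0Sn t) tn).
  by rewrite addn0 => /(_ E).
by rewrite ne addnS -addSn mem_window // ltnW.
Qed.

Lemma window_adj (i : nat) : CIS_adj e k (window i) (window i.+1).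
Proof.
have ciW : c i \in window i by have := mem_window i k_gt0; rewrite addn0.
have cardD : #|window i :\ c i| = k.-1.
  by have := cardsD1 (c i) (window i); rewrite ciW card_window => ->.
rewrite /CIS_adj !window_CIS window_meet cardD eqxx andbT /=.
by apply: contraNneq (window_start_notin_next i) => <-.
Qed.

Lemma odd_cycle_windows : odd n -> ~ CIS_graph_bipartite e k.
Proof.
move=> odd_n; apply: (@odd_closed_walk_not_bipartite _ _ _ window n) => //.
- by move=> i _; rewrite unfold_in window_CIS.
- by move=> i _; apply: window_adj.
- by apply: eq_imset => t; rewrite add0n addnC c_period.
Qed.
End CycleWindows.

Section WalksOfMaxDegreeTwo.
Variables (T : finType) (e : rel T) (x0 : T).
Hypothesis e_sym : symmetric e.
Hypothesis deg_le2 : forall x, degree e x <= 2.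

Definition walk_seq (s : seq T) : Prop :=
  forall i, i.+1 < size s -> e (nth x0 s i) (nth x0 s i.+1).

(* The two path neighbours of an interior node of a path use up its degree. *)
Lemma interior_neighbour (s : seq T) (i : nat) (w : T) :
  uniq s -> walk_seq s -> 0 < i -> i.+1 < size s -> e (nth x0 s i) w ->
  w = nth x0 s i.-1 \/ w = nth x0 s i.+1.
Proof.
move=> us ws i0 isz eiw.
have e_prev : e (nth x0 s i) (nth x0 s i.-1).
  by rewrite e_sym; have := ws i.-1; rewrite prednK //; apply; apply: ltnW.
have e_next : e (nth x0 s i) (nth x0 s i.+1) by apply: ws.
have prev_next : nth x0 s i.-1 != nth x0 s i.+1.
  rewrite nth_uniq //; first lia.
  exact: leq_ltn_trans (leq_pred i) (ltnW isz).
have [|w_prev] := eqVneq w (nth x0 s i.-1); first by left.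
have [|w_next] := eqVneq w (nth x0 s i.+1); first by right.
have := degree_gt2 e_prev e_next eiw.
rewrite /= !inE negb_or prev_next !(eq_sym _ w) w_prev w_next.
by rewrite ltnNge deg_le2 => /(_ isT).
Qed.

(* In a connected graph of maximum degree two a path missing some node can be
   prolonged at one of its ends: a boundary edge cannot leave from an
   interior node. *)
Lemma path_extend (s : seq T) (y : T) :
  connected_graph e -> uniq s -> walk_seq s -> 0 < size s -> y \notin s ->
  exists2 s', uniq s' /\ walk_seq s' & size s' = (size s).+1.
Proof.
move=> conn us ws s0 ys.
have s0S : nth x0 s 0 \in [set x in s] by rewrite inE mem_nth.
have yS : y \notin [set x in s] by rewrite inE.
have [u [w []]] := boundary_edge (conn (nth x0 s 0) y) s0S yS.
rewrite !inE => us' ws' euw.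
have i_s : index u s < size s by rewrite index_mem.
have i_u : nth x0 s (index u s) = u by rewrite nth_index.
have [i_last | i_int] := leqP (size s) (index u s).+1.
  exists (rcons s w); last by rewrite size_rcons.
  split; first by rewrite rcons_uniq ws' us.
  move=> j; rewrite size_rcons ltnS => js; rewrite !nth_rcons js.
  have [j_int | j_end] := ltnP j.+1 (size s); first exact: ws.
  have -> : j.+1 == size s by rewrite eqn_leq j_end js.
  have -> : j = index u s by lia.
  by rewrite i_u.
have [i0 | i0] := posnP (index u s).
  exists (w :: s) => //; split; first by rewrite /= ws' us.
  by case=> [|j] /= js; [rewrite -i0 i_u e_sym | apply: ws].
have := interior_neighbour us ws i0 i_int; rewrite i_u => /(_ w euw).
by case=> wE; move: ws'; rewrite wE mem_nth // (leq_ltn_trans (leq_pred _) i_s).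
Qed.

Lemma hamiltonian_path :
  connected_graph e -> exists s, [/\ uniq s, walk_seq s & forall x, x \in s].
Proof.
move=> conn.
have size_le (s : seq T) : uniq s -> size s <= #|T|.
  by move=> us; rewrite -(card_uniqP us) max_card.
have step (s : seq T) : uniq s -> walk_seq s -> 0 < size s ->
    (forall x, x \in s) \/
    exists2 s', uniq s' /\ walk_seq s' & size s' = (size s).+1.
  move=> us ws s0.
  case: (boolP [forall x, x \in s]) => [/forallP | /forallPn [y ys]].
    by left.
  by right; apply: path_extend conn us ws s0 ys.
have grow : forall m (s : seq T), uniq s -> walk_seq s -> 0 < size s ->
    #|T| - size s <= m -> exists s, [/\ uniq s, walk_seq s & forall x, x \in s].
  elim=> [|m IH] s us ws s0 sm;
    have [all_s | [s' [us' ws'] size_s']] := step s us ws s0; try (by exists s);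
    have := size_le s' us'; rewrite size_s' => sT.
  - lia.
  - by apply: (IH s') => //; rewrite size_s' //; lia.
by apply: (grow #|T| [:: x0]) => //; rewrite leq_subr.
Qed.

Lemma walk_chord (s : seq T) (i j : nat) :
  uniq s -> walk_seq s -> i.+1 < j -> j < size s ->
  e (nth x0 s i) (nth x0 s j) -> i = 0 /\ j = (size s).-1.
Proof.
move=> us ws ij js eij.
have nth_inj a b : a < size s -> b < size s -> nth x0 s a = nth x0 s b -> a = b.
  by move=> ha hb /eqP; rewrite nth_uniq // => /eqP.
have [i0 | i0] := posnP i.
  split=> //; have [j_int | ] := ltnP j.+1 (size s); last lia.
  have eji : e (nth x0 s j) (nth x0 s 0) by rewrite e_sym -i0.
  have j0 : 0 < j by lia.
  by case: (interior_neighbour us ws j0 j_int eji) => /nth_inj; lia.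
have i_int : i.+1 < size s by lia.
by case: (interior_neighbour us ws i0 i_int eij) => /esym /nth_inj; lia.
Qed.

Lemma spanning_path_bipartite (s : seq T) :
  irreflexive e -> uniq s -> walk_seq s -> (forall x, x \in s) ->
  ~~ (odd (size s) && e (nth x0 s (size s).-1) (nth x0 s 0)) -> bipartite e.
Proof.
move=> e_irr us ws s_all no_odd_cycle.
exists (fun x => odd (index x s)) => x y _ _.
wlog le_xy : x y / index x s <= index y s.
  move=> wlog_le exy; have [le | lt] := leqP (index x s) (index y s).
    exact: wlog_le.
  by rewrite eq_sym; apply: wlog_le (ltnW lt) _; rewrite e_sym.
have ys : index y s < size s by rewrite index_mem.
rewrite -{1}(nth_index x0 (s_all x)) -{1}(nth_index x0 (s_all y)).
move: le_xy; rewrite leq_eqVlt => /predU1P [-> | ]; first by rewrite e_irr.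
rewrite leq_eqVlt => /predU1P [<- _ | far exy]; first by rewrite /=; case: odd.
have [i0 jn] := walk_chord us ws far ys exy.
rewrite i0 jn in exy *; apply: contraNN no_odd_cycle => /= /eqP /esym even_end.
have s0 : 0 < size s by apply: leq_ltn_trans ys.
have odd_n : odd (size s) by rewrite -(prednK s0) /= even_end.
by rewrite odd_n e_sym exy.
Qed.

End WalksOfMaxDegreeTwo.

Lemma low_degree_not_bipartite (T : finType) (e : rel T) (k : nat) :
  simple_graph e -> connected_graph e -> ~ bipartite e ->
  (forall x, degree e x <= 2) -> 2 <= k -> k < #|T| -> ~ CIS_graph_bipartite e k.
Proof.
move=> [e_sym e_irr] conn nbip deg_le2 k2 kT.
have /card_gt0P [x0 _] : 0 < #|T| by lia.
have [s [us ws s_all]] := hamiltonian_path x0 e_sym deg_le2 conn.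
have size_s : size s = #|T| by rewrite -(card_uniqP us) cardT; apply: eq_cardT.
have [/andP [odd_s closing] | no_odd_cycle] :=
  boolP (odd (size s) && e (nth x0 s (size s).-1) (nth x0 s 0)); last first.
  by case: nbip; apply: spanning_path_bipartite no_odd_cycle.
have s0 : 0 < size s by lia.
pose c i := nth x0 s (i %% size s).
apply: (@odd_cycle_windows _ e (size s) k c) => //; last lia.
- by move=> i; rewrite /c modnDr.
- by move=> i j /eqP; rewrite /c nth_uniq ?ltn_pmod // => /eqP.
- move=> i; rewrite /c -addn1 -modnDml addn1.
  have [last_i | not_last] := eqVneq (i %% size s).+1 (size s).
    have i_end : i %% size s = (size s).-1 by rewrite -[in RHS]last_i.
    by rewrite last_i modnn i_end.
  have inner : (i %% size s).+1 < size s by rewrite ltn_neqAle not_last ltn_pmod.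
  by rewrite (modn_small inner); apply: ws.
- lia.
Qed.

Theorem theorem2 (T : finType) (e : rel T) (k : nat) :
  simple_graph e ->
  connected_graph e ->
  (~ bipartite e \/ exists x : T, 2 < degree e x) ->
  2 <= k -> k < #|T| ->
  ~ CIS_graph_bipartite e k.
Proof.
move=> simple conn non_bip_or_branch k2 kT.
have [v dv | low] := pickP (fun x => 2 < degree e x).
  exact: high_degree_not_bipartite simple conn dv k2 kT.
apply: low_degree_not_bipartite simple conn _ _ k2 kT.
- by case: non_bip_or_branch => // [[x dx]]; rewrite low in dx.
- by move=> x; rewrite leqNgt low.
Qed.
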